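(* Let $v,w\in\mathbb{R}^n\setminus\{0\}$ and $A\in\mathrm{GL}_n(\mathbb{R})$ satisfy $A\circ Q_v=Q_w\circ(A,A)$, i.e. $A(Q_v(\xi,\eta))=Q_w(A\xi,A\eta)$ for all $\xi,\eta\in\mathbb{R}^n$. Then $A=cT$ for some $c>0$ and $T\in O(n)$.
   Context: For $v\in\mathbb{R}^n$, $Q_v:\mathbb{R}^n\times\mathbb{R}^n\to\mathbb{R}^n$ is the symmetric bilinear map $Q_v(\xi,\eta)=\langle\xi,\eta\rangle v-\langle\xi,v\rangle\eta-\langle\eta,v\rangle\xi$, where $\langle\cdot,\cdot\rangle$ is the Euclidean inner product. $O(n)$ is the orthogonal group. *)

From mathcomp Require Import all_boot all_order all_algebra.
From mathcomp Require Import reals.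
Set Implicit Arguments. Unset Strict Implicit. Unset Printing Implicit Defensive.
Import Order.TTheory GRing.Theory Num.Theory.
Local Open Scope ring_scope.

Definition dotv (R : realType) (n : nat) (x y : 'cV[R]_n) : R := (x^T *m y) 0 0.

Definition Qv (R : realType) (n : nat) (v xi eta : 'cV[R]_n) : 'cV[R]_n :=
  dotv xi eta *: v - dotv xi v *: eta - dotv eta v *: xi.

Definition orthogonal_mx (R : realType) (n : nat) (T : 'M[R]_n) : Prop :=
  T^T *m T = 1%:M.

(* Pulling the identity back through A gives, with z := A^-1 w and u := A^T w,
   Q_v(xi,eta) = <A xi, A eta> z - <xi,u> eta - <eta,u> xi.
   Pairing with a third vector and specialising the three vectors to z and to
   d := v - u forces <z,v> = |w|^2, then <d,d> = 0, i.e. u = v.  With u = v the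
   paired identity at zeta = z reads |z|^2 <A xi, A eta> = |w|^2 <xi, eta>, so
   A^T A = k I with k = |w|^2 / |z|^2 > 0 and A = sqrt k * (A / sqrt k). *)
From mathcomp Require Import all_boot all_order all_algebra.
From mathcomp Require Import reals.
From mathcomp Require Import ring lra.
Set Implicit Arguments. Unset Strict Implicit. Unset Printing Implicit Defensive.
Import Order.TTheory GRing.Theory Num.Theory.
Local Open Scope ring_scope.

Section Dot.
Variables (R : realType) (n : nat).
Implicit Types x y z : 'cV[R]_n.

Lemma dotvE x y : dotv x y = \sum_i x i 0 * y i 0.
Proof. by rewrite /dotv mxE; apply: eq_bigr => i _; rewrite mxE. Qed.

Lemma dotvC x y : dotv x y = dotv y x.
Proof. by rewrite !dotvE; apply: eq_bigr => i _; rewrite mulrC. Qed.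

Lemma dotvBr x y z : dotv x (y - z) = dotv x y - dotv x z.
Proof. by rewrite /dotv mulmxBr !mxE. Qed.

Lemma dotvBl x y z : dotv (y - z) x = dotv y x - dotv z x.
Proof. by rewrite dotvC dotvBr !(dotvC x). Qed.

Lemma dotvZr a x y : dotv x (a *: y) = a * dotv x y.
Proof. by rewrite /dotv -scalemxAr mxE. Qed.

Lemma dotv_mulmxl (A : 'M[R]_n) x y : dotv (A *m x) y = dotv x (A^T *m y).
Proof. by rewrite /dotv trmx_mul mulmxA. Qed.

Lemma dotv_ge0 x : 0 <= dotv x x.
Proof. by rewrite dotvE; apply: sumr_ge0 => i _; rewrite -expr2 sqr_ge0. Qed.

Lemma dotv_eq0 x : (dotv x x == 0) = (x == 0).
Proof.
apply/idP/eqP => [|->]; last by rewrite /dotv mulmx0 mxE.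
rewrite dotvE psumr_eq0 => [/allP x0|i _]; last by rewrite -expr2 sqr_ge0.
apply/matrixP => i j; rewrite ord1 mxE.
by have /implyP/(_ isT) := x0 i (mem_index_enum i); rewrite -expr2 sqrf_eq0 => /eqP.
Qed.

Lemma dotv_gt0 x : (0 < dotv x x) = (x != 0).
Proof. by rewrite lt_def dotv_ge0 dotv_eq0 andbT. Qed.

Lemma dotv_delta (i : 'I_n) y : dotv (delta_mx i 0) y = y i 0.
Proof.
rewrite dotvE (bigD1 i) //= big1 ?addr0; first by rewrite mxE !eqxx mul1r.
by move=> k /negbTE nk; rewrite mxE nk mul0r.
Qed.

Lemma trmx_mul_scalar (A : 'M[R]_n) k :
  (forall x y, dotv (A *m x) (A *m y) = k * dotv x y) -> A^T *m A = k%:M.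
Proof.
move=> Ak; apply/matrixP => i j.
have := Ak (delta_mx i 0) (delta_mx j 0).
rewrite dotv_mulmxl mulmxA !dotv_delta -colE !mxE => ->.
by rewrite mulr_natr andbT eq_sym.
Qed.

Lemma scalar_orthogonal_decomposition (A : 'M[R]_n) (k : R) :
  0 < k -> A^T *m A = k%:M ->
  exists (c : R) (T : 'M[R]_n), 0 < c /\ orthogonal_mx T /\ A = c *: T.
Proof.
move=> k_gt0 AtA; set c := Num.sqrt k.
have c_gt0 : 0 < c by rewrite sqrtr_gt0.
have c_neq0 : c != 0 by rewrite gt_eqF.
exists c, (c^-1 *: A); split => //; split; last first.
  by rewrite scalerA mulfV // scale1r.
rewrite /orthogonal_mx [_^T]linearZ /= -scalemxAl -scalemxAr scalerA AtA.
rewrite -[k%:M]scalemx1 scalerA -(sqr_sqrtr (ltW k_gt0)) -/c.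
have c_coef : c^-1 / c * c ^+ 2 = 1 by field.
by rewrite c_coef scale1r.
Qed.

End Dot.

Section Pullback.
Variables (R : realType) (n : nat) (v w : 'cV[R]_n) (A : 'M[R]_n).
Hypotheses (w_neq0 : w != 0) (A_unit : A \in unitmx).
Hypothesis AQ : forall xi eta, A *m Qv v xi eta = Qv w (A *m xi) (A *m eta).

Let z := invmx A *m w.
Let u := A^T *m w.

Lemma Qv_pullback xi eta : Qv v xi eta =
  dotv (A *m xi) (A *m eta) *: z - dotv xi u *: eta - dotv eta u *: xi.
Proof.
have := congr1 (mulmx (invmx A)) (AQ xi eta); rewrite mulKmx // => ->.
by rewrite /Qv !mulmxBr -!scalemxAr !mulKmx // !dotv_mulmxl.
Qed.

Lemma dotv_Qv_pullback xi eta zeta :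
  dotv xi eta * dotv zeta v - dotv xi v * dotv zeta eta - dotv eta v * dotv zeta xi =
  dotv (A *m xi) (A *m eta) * dotv zeta z - dotv xi u * dotv zeta eta
    - dotv eta u * dotv zeta xi.
Proof.
have := congr1 (dotv zeta) (Qv_pullback xi eta).
by rewrite /Qv !dotvBr !dotvZr.
Qed.

Let Az : A *m z = w. Proof. by rewrite /z mulKVmx. Qed.

Let z_neq0 : z != 0.
Proof. by apply: contraNneq w_neq0 => z0; rewrite -Az z0 mulmx0. Qed.

Let zz_gt0 : 0 < dotv z z. Proof. by rewrite dotv_gt0. Qed.
Let ww_gt0 : 0 < dotv w w. Proof. by rewrite dotv_gt0. Qed.

Let zu : dotv z u = dotv w w. Proof. by rewrite -dotv_mulmxl Az. Qed.

Lemma dotv_pullback_z_v : dotv z v = dotv w w.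
Proof.
have := dotv_Qv_pullback z z z; rewrite Az zu => e.
have : dotv z z * (dotv z v - dotv w w) = 0 by lra.
by move/eqP; rewrite mulf_eq0 gt_eqF //= subr_eq0 => /eqP.
Qed.

Lemma dotv_v_proportional_z zeta : dotv z z * dotv zeta v = dotv w w * dotv zeta z.
Proof.
have := dotv_Qv_pullback z z zeta; rewrite Az zu dotv_pullback_z_v; lra.
Qed.

Lemma trmx_mul_w_eq_v : A^T *m w = v.
Proof.
set d := v - u.
have dz : dotv d z = 0.
  by rewrite dotvBl !(dotvC _ z) zu dotv_pullback_z_v subrr.
have dv : dotv d v = 0.
  have /eqP := dotv_v_proportional_z d.
  by rewrite dz mulr0 mulf_eq0 gt_eqF //= => /eqP.
have du : dotv d u = - dotv d d by rewrite {2}/d dotvBr dv sub0r opprK.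
(* pairing Q_v(d,d) with d leaves only -2<d,u><d,d> = 2<d,d>^2 = 0 *)
have dd : dotv d d * dotv d d = 0.
  by have := dotv_Qv_pullback d d d; rewrite dz dv du; nra.
apply/eqP; rewrite eq_sym -subr_eq0 -dotv_eq0.
by move/eqP: dd; rewrite mulf_eq0 orbb.
Qed.

Lemma dotv_mulmx_conformal xi eta :
  dotv (A *m xi) (A *m eta) = dotv w w / dotv z z * dotv xi eta.
Proof.
have := dotv_Qv_pullback xi eta z.
rewrite /u trmx_mul_w_eq_v dotv_pullback_z_v => e.
have e' : dotv (A *m xi) (A *m eta) * dotv z z = dotv w w * dotv xi eta by lra.
have zz_neq0 : dotv z z != 0 by rewrite gt_eqF.
by apply: (mulIf zz_neq0); rewrite e' mulrAC divfK.
Qed.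

Lemma trmx_mul_pullback : A^T *m A = (dotv w w / dotv z z)%:M.
Proof. exact/trmx_mul_scalar/dotv_mulmx_conformal. Qed.

Lemma pullback_scale_gt0 : 0 < dotv w w / dotv z z.
Proof. by rewrite divr_gt0. Qed.

End Pullback.

Theorem lemma3p2 (R : realType) (n : nat) (v w : 'cV[R]_n) (A : 'M[R]_n) :
  v != 0 -> w != 0 -> A \in unitmx ->
  (forall xi eta : 'cV[R]_n, A *m Qv v xi eta = Qv w (A *m xi) (A *m eta)) ->
  exists (c : R) (T : 'M[R]_n), 0 < c /\ orthogonal_mx T /\ A = c *: T.
Proof.
(* [v != 0] is redundant: it follows from [A^T w = v]. *)
move=> _ w_neq0 A_unit AQ.
exact: scalar_orthogonal_decomposition (pullback_scale_gt0 w_neq0 A_unit)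
  (trmx_mul_pullback w_neq0 A_unit AQ).
Qed.
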